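(* Under the standing assumptions and definitions in the context, let $\mathbf{x}^{(k)}\in\Gamma$ and let $\mathbf{x}^{(k+1)}=\arg\min_{\mathbf{x}\in\mathcal{F}(\mathbf{x}^{(k)})}J(\mathbf{x})$. Then $\nabla J(\mathbf{x}^{(k+1)})\cdot(\mathbf{x}^{(k)}-\mathbf{x}^{(k+1)})\ge0$. Moreover, if $J(\mathbf{x}^{(k+1)})=J(\mathbf{x}^{(k)})$, then $\mathbf{x}^{(k+1)}=\mathbf{x}^{(k)}$.
   Context: Problem: minimize $J(\mathbf{x})$ over $\mathbf{x}\in\Gamma\subset\mathbb{R}^n$, where (i) $J:\mathbb{R}^n\to\mathbb{R}^+$ is smooth and strictly convex; (ii) $\Gamma$ is connected and closed with piecewise smooth, non-self-intersecting boundary, and every point of $\Gamma$ lies in some $n$-dimensional convex polytope contained in $\Gamma$. Semi-convex decomposition: $\Gamma=\bigcap_{i=1}^N\Gamma_i$, $\Gamma_i=\{\mathbf{x}:\phi_i(\mathbf{x})\ge 0\}$, $\partial\Gamma_i=\{\mathbf{x}:\phi_i(\mathbf{x})=0\}$, where each $\phi_i:\mathbb{R}^n\to\mathbb{R}$ is continuous, piecewise smooth and semi-convex: there is a positive semidefinite $H_i^*$ such that $\mathbf{x}\mapsto\phi_i(\mathbf{x})+\frac12(\mathbf{x}-\mathbf{x}_0)^TH_i^*(\mathbf{x}-\mathbf{x}_0)$ is convex for every $\mathbf{x}_0$. One-sided directional derivative: $\partial_v\phi_i(\mathbf{x})=\lim_{a\to0^+}(\phi_i(\mathbf{x}+av)-\phi_i(\mathbf{x}))/a$.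 Sub-differential: $D\phi_i(\mathbf{x})=\{d\in\mathbb{R}^n: d\cdot v\le\partial_v\phi_i(\mathbf{x})\ \forall v\in\mathbb{R}^n\}$. It is assumed that: (1) $D\phi_i(\mathbf{x})\neq\{0\}$ for all $\mathbf{x}$; (2) $0\notin D\phi_i(\mathbf{x})$ if $\mathbf{x}\in\partial\Gamma_i$; (3) for any $\mathbf{x}$ with $I:=\{i:\phi_i(\mathbf{x})=0\}\ne\emptyset$ there is $v$ with $\partial_v\phi_i(\mathbf{x})<0$ for all $i\in I$. Optimal sub-gradients at a reference $\mathbf{x}^r$: a unit vector $v$ is a feasible search direction if for every $i$: $\phi_i(\mathbf{x}^r)>0$; or $\phi_i(\mathbf{x}^r)=0$ and some $d\in D\phi_i(\mathbf{x}^r)$ has $v\cdot d\ge0$; or $\phi_i(\mathbf{x}^r)<0$ and some $d\in D\phi_i(\mathbf{x}^r)$ has $v\cdot d>0$. Let $C(\mathbf{x}^r)$ be the set of these, and $v^*=\arg\min_{v\in C(\mathbf{x}^r)}\nabla J(\mathbf{x}^r)\cdot v$ (ties broken lexicographically). Let $DF_i=D\phi_i(\mathbf{x}^r)$ if $\phi_i(\mathbf{x}^r)>0$, $DF_i=\{d\in D\phi_i(\mathbf{x}^r):d\cdot v^*\ge0\}$ if $\phi_i(\mathbf{x}^r)=0$, $DF_i=\{d\in D\phi_i(\mathbf{x}^r):d\cdot v^*>0\}$ if $\phi_i(\mathbf{x}^r)<0$, and $\hat\nabla\phi_i(\mathbf{x}^r)=\arg\min_{d\in DF_i}\nabla J(\mathbf{x}^r)\cdot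 d/\|d\|$ (with $d/\|d\|:=0$ if $d=0$). Convex feasible set: $\mathcal{F}_i(\mathbf{x}^r)=\Gamma_i$ if $\phi_i$ is concave; $\mathcal{F}_i(\mathbf{x}^r)=\{\mathbf{x}:\phi_i(\mathbf{x}^r)+\hat\nabla\phi_i(\mathbf{x}^r)(\mathbf{x}-\mathbf{x}^r)\ge0\}$ if $\phi_i$ is convex; $\mathcal{F}_i(\mathbf{x}^r)=\{\mathbf{x}:\phi_i(\mathbf{x}^r)+\hat\nabla\phi_i(\mathbf{x}^r)(\mathbf{x}-\mathbf{x}^r)\ge\frac12(\mathbf{x}-\mathbf{x}^r)^TH_i^*(\mathbf{x}-\mathbf{x}^r)\}$ otherwise; $\mathcal{F}(\mathbf{x}^r)=\bigcap_{i=1}^N\mathcal{F}_i(\mathbf{x}^r)$. *)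

From HB Require Import structures.
From mathcomp Require Import all_boot all_order all_algebra.
From mathcomp Require Import all_classical all_reals all_analysis.
Set Implicit Arguments. Unset Strict Implicit. Unset Printing Implicit Defensive.
Import Order.TTheory GRing.Theory Num.Theory.
Import numFieldNormedType.Exports.
Local Open Scope classical_set_scope.
Local Open Scope ring_scope.

Section Defs.
Variables (R : realType) (n : nat).
Notation V := 'rV[R]_n.

Definition dotv (u v : V) : R := \sum_(i < n) u ord0 i * v ord0 i.
Definition enorm (u : V) : R := Num.sqrt (dotv u u).

Definition qform (H : 'M[R]_n) (u : V) : R := (u *m H *m u^T) ord0 ord0.
Definition psd (H : 'M[R]_n) : Prop := H^T = H /\ forall u : V, 0 <= qform H u.

Definition grad (f : V -> R) (x : V) : V :=
  \row_(i < n) 'D_(delta_mx ord0 i) f x.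

Fixpoint iter_dir (f : V -> R) (vs : seq V) : V -> R :=
  match vs with
  | [::] => f
  | v :: vs' => fun x => 'D_v (iter_dir f vs') x
  end.

(* C^infinity: every iterated directional derivative exists and is
   (Frechet) differentiable everywhere *)
Definition smooth (f : V -> R) : Prop :=
  forall (vs : seq V) (x : V), differentiable (iter_dir f vs) x.

Definition convex_fun (f : V -> R) : Prop :=
  forall (x y : V) (t : R), 0 <= t <= 1 ->
    f (t *: x + (1 - t) *: y) <= t * f x + (1 - t) * f y.
Definition concave_fun (f : V -> R) : Prop := convex_fun (fun x => - f x).
Definition strictly_convex (f : V -> R) : Prop :=
  forall (x y : V) (t : R), x != y -> 0 < t < 1 ->
    f (t *: x + (1 - t) *: y) < t * f x + (1 - t) * f y.

Definition semi_convex (f : V -> R) (H : 'M[R]_n) : Prop :=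
  psd H /\ forall x0 : V, convex_fun (fun x => f x + 2^-1 * qform H (x - x0)).

Definition piecewise_smooth (f : V -> R) : Prop :=
  exists (m : nat) (P : 'I_m -> set V) (g : 'I_m -> V -> R),
    (forall j, closed (P j)) /\ (forall x, exists j, P j x) /\
    (forall j, smooth (g j)) /\ (forall j x, P j x -> f x = g j x).

Definition conv_hull (m : nat) (p : 'I_m -> V) : set V :=
  [set x | exists lam : 'I_m -> R, (forall j, 0 <= lam j) /\
     \sum_(j < m) lam j = 1 /\ x = \sum_(j < m) lam j *: p j].
Definition full_dim_polytope (P : set V) : Prop :=
  exists (m : nat) (p : 'I_m -> V), P = conv_hull p /\ interior P !=set0.

Definition boundary (A : set V) : set V := closure A `\` interior A.

Definition dir_deriv (f : V -> R) (x v : V) : R :=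
  lim ((fun a : R => (f (x + a *: v) - f x) / a) @ at_right 0).
Definition subdiff (f : V -> R) (x : V) : set V :=
  [set d | forall v : V, dotv d v <= dir_deriv f x v].

Definition lex_le (u v : V) : Prop :=
  u = v \/ exists k : 'I_n, (forall j : 'I_n, (j < k)%N -> u ord0 j = v ord0 j)
                          /\ u ord0 k < v ord0 k.

Variable N : nat.
Variables (phi : 'I_N -> V -> R) (J : V -> R) (xr : V).

Definition feasible_dir (v : V) : Prop :=
  enorm v = 1 /\
  forall i : 'I_N,
    0 < phi i xr \/
    (phi i xr = 0 /\ exists2 d, subdiff (phi i) xr d & 0 <= dotv v d) \/
    (phi i xr < 0 /\ exists2 d, subdiff (phi i) xr d & 0 < dotv v d).

Definition optimal_dir (vs : V) : Prop :=
  feasible_dir vs /\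
  (forall v, feasible_dir v -> dotv (grad J xr) vs <= dotv (grad J xr) v) /\
  (forall v, feasible_dir v -> dotv (grad J xr) v = dotv (grad J xr) vs ->
     lex_le vs v).

Definition DF (vs : V) (i : 'I_N) : set V :=
  if `[< 0 < phi i xr >] then subdiff (phi i) xr
  else if `[< phi i xr = 0 >] then
    [set d | subdiff (phi i) xr d /\ 0 <= dotv d vs]
  else [set d | subdiff (phi i) xr d /\ 0 < dotv d vs].

Definition normalized (d : V) : V := if d == 0 then 0 else (enorm d)^-1 *: d.

Definition optimal_subgrad (vs : V) (i : 'I_N) (g : V) : Prop :=
  DF vs i g /\
  forall d, DF vs i d ->
    dotv (grad J xr) (normalized g) <= dotv (grad J xr) (normalized d).

Definition Fi (H : 'I_N -> 'M[R]_n) (g : 'I_N -> V) (i : 'I_N) : set V :=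
  if `[< concave_fun (phi i) >] then [set x | 0 <= phi i x]
  else if `[< convex_fun (phi i) >] then
    [set x | 0 <= phi i xr + dotv (g i) (x - xr)]
  else [set x | 2^-1 * qform (H i) (x - xr) <= phi i xr + dotv (g i) (x - xr)].

Definition Fset (H : 'I_N -> 'M[R]_n) (g : 'I_N -> V) : set V :=
  [set x | forall i, Fi H g i x].

End Defs.

From HB Require Import structures.
From mathcomp Require Import all_boot all_order all_algebra.
From mathcomp Require Import all_classical all_reals all_analysis.
From mathcomp Require Import ring lra.
Import Order.TTheory GRing.Theory Num.Theory.
Import numFieldNormedType.Exports.
Local Open Scope classical_set_scope.
Local Open Scope ring_scope.
Local Open Scope convex_scope.

(* F(x^k) is convex: each F_i is a set {h <= g} with h convex (a constant, or
   the quadratic term, convex because H_i is positive semidefinite) and g concave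
   (phi_i itself, or an affine function).  It contains x^k because x^k lies in
   Gamma.  The difference quotients of J at the minimiser x^(k+1) along the
   segment towards x^k are therefore nonnegative, and their limit is
   grad J(x^(k+1)) . (x^k - x^(k+1)).  If J(x^(k+1)) = J(x^k) with distinct
   points, strict convexity makes their midpoint, which lies in F(x^k), strictly
   better than the minimiser. *)

Section ConvexSets.
Context {R : numDomainType} {V : lmodType R}.

Lemma conv_lmodE (t : {i01 R}) (x y : convex_lmodType V) :
  x <| t |> y = t%:num *: x + (1 - t%:num) *: y.
Proof. by []. Qed.

Lemma convex_set_bigcap (I : Type) (A : I -> set V) :
  (forall i, convex_set (A i)) -> convex_set [set x | forall i, A i x].
Proof.
move=> cA x y t; rewrite !inE => xA yA i.
by have := cA i x y t; rewrite !inE; apply.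
Qed.

End ConvexSets.

Section ConvexMinimum.
Context {R : realFieldType} {V : normedModType R}.

Lemma convex_min_derive_ge0 (f : V -> R) (C : set V) (x y : V) :
  convex_set C -> x \in C -> y \in C -> (forall z, z \in C -> f x <= f z) ->
  derivable f x (y - x) -> 0 <= 'D_(y - x) f x.
Proof.
move=> cC xC yC xmin fx; rewrite /derive (cvg_at_rightE _ _ fx).
apply: limr_ge.
  apply: cvgP (cvg_trans _ fx); apply: cvg_app.
  by apply: within_subset => /= z /lt0r_neq0.
near=> h.
have h0 : 0 < h by near: h; exact: nbhs_right_gt.
have h1 : h < 1 by near: h; exact: nbhs_right_lt.
have hC := cC y x (Itv01 (ltW h0) (ltW h1)) yC xC.
rewrite /=; have -> : h *: (y - x) + x = h *: y + (1 - h) *: x.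
  by rewrite scalerBr scalerBl scale1r addrA addrAC.
apply: mulr_ge0; first by rewrite invr_ge0 ltW.
by rewrite subr_ge0 xmin.
Unshelve. all: by end_near. Qed.

End ConvexMinimum.

Section RowVectors.
Context {R : realType} {n : nat}.
Implicit Types (x y u v g : 'rV[R]_n) (H : 'M[R]_n).

Lemma dotvDr g u v : dotv g (u + v) = dotv g u + dotv g v.
Proof. by rewrite /dotv -big_split; apply: eq_bigr => j _; rewrite mxE mulrDr. Qed.

Lemma dotvZr g a u : dotv g (a *: u) = a * dotv g u.
Proof. by rewrite /dotv mulr_sumr; apply: eq_bigr => j _; rewrite mxE mulrCA. Qed.

Lemma dotv0r g : dotv g 0 = 0.
Proof. by rewrite -(scale0r 0) dotvZr mul0r. Qed.

Lemma qform0 H : qform H 0 = 0.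
Proof. by rewrite /qform !mul0mx mxE. Qed.

Lemma qformE H u : qform H u = \sum_j \sum_k u 0 k * H k j * u 0 j.
Proof.
rewrite /qform mxE; apply: eq_bigr => j _; rewrite !mxE mulr_suml.
by apply: eq_bigr => k _.
Qed.

Lemma qform_convex_comb H u v t :
  t * qform H u + (1 - t) * qform H v =
  qform H (t *: u + (1 - t) *: v) + t * (1 - t) * qform H (u - v).
Proof.
rewrite !qformE !mulr_sumr -!big_split /=; apply: eq_bigr => j _.
rewrite !mulr_sumr -!big_split /=; apply: eq_bigr => k _.
by rewrite !mxE; ring.
Qed.

Lemma sub_convex_comb x y z t :
  t *: x + (1 - t) *: y - z = t *: (x - z) + (1 - t) *: (y - z).
Proof. by apply/rowP => k; rewrite !mxE; ring. Qed.

Lemma convex_fun_cst c : convex_fun (fun _ : 'rV[R]_n => c).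
Proof. by move=> x y t _; rewrite -mulrDl subrKC mul1r. Qed.

Lemma concave_fun_affine c g x0 :
  concave_fun (fun x : 'rV[R]_n => c + dotv g (x - x0)).
Proof.
move=> x y t _ /=; rewrite sub_convex_comb [dotv g (t *: _ + _)]dotvDr !dotvZr.
lra.
Qed.

Lemma convex_fun_qform H (a : R) x0 : psd H -> 0 <= a ->
  convex_fun (fun x => a * qform H (x - x0)).
Proof.
move=> [_ Hpsd] a0 x y t /andP[t0 t1].
rewrite mulrCA [(1 - t) * _]mulrCA -mulrDr qform_convex_comb sub_convex_comb.
by rewrite ler_wpM2l // lerDl mulr_ge0 ?Hpsd // mulr_ge0 // subr_ge0.
Qed.

Lemma convex_set_le (h g : 'rV[R]_n -> R) :
  convex_fun h -> concave_fun g -> convex_set [set x | h x <= g x].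
Proof.
move=> hcvx gcav x y t; rewrite !inE /= => hgx hgy.
have t01 : 0 <= t%:num <= 1 by rewrite ge0 le1.
have /andP[t0 t1] := t01.
have := gcav x y _ t01; have := hcvx x y _ t01; rewrite conv_lmodE /=.
have : t%:num * h x + (1 - t%:num) * h y <= t%:num * g x + (1 - t%:num) * g y.
  by rewrite lerD // ler_wpM2l // subr_ge0.
lra.
Qed.

Lemma grad_dotvE (f : 'rV[R]_n -> R) x v :
  differentiable f x -> dotv (grad f x) v = 'D_v f x.
Proof.
move=> fx; rewrite deriveE // [in RHS](row_sum_delta v) linear_sum /=.
by apply: eq_bigr => j _; rewrite linearZ /= mxE deriveE // mulrC.
Qed.

Lemma strictly_convex_min_unique (f : 'rV[R]_n -> R) (C : set 'rV[R]_n) x y :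
  strictly_convex f -> convex_set C -> x \in C -> y \in C ->
  (forall z, z \in C -> f x <= f z) -> f x = f y -> x = y.
Proof.
move=> fcvx cC xC yC xmin fxy; case: (eqVneq x y) => // xy; exfalso.
have half0 : 0 < 2^-1 :> R by lra.
have half1 : 2^-1 < 1 :> R by lra.
have := fcvx x y 2^-1 xy; rewrite half0 half1 => /(_ isT).
have := xmin _ (cC x y (Itv01 (ltW half0) (ltW half1)) xC yC); rewrite conv_lmodE /=.
lra.
Qed.

End RowVectors.

Section FeasibleSet.
Context {R : realType} {n N : nat}.
Variables (phi : 'I_N -> 'rV[R]_n -> R) (xr : 'rV[R]_n).
Variables (H : 'I_N -> 'M[R]_n) (g : 'I_N -> 'rV[R]_n).

Lemma convex_set_Fi i : psd (H i) -> convex_set (Fi phi xr H g i).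
Proof.
move=> Hpsd; rewrite /Fi; case: asboolP => [phi_cav|_].
  exact: convex_set_le (convex_fun_cst 0) phi_cav.
case: asboolP => _.
  exact: convex_set_le (convex_fun_cst 0) (concave_fun_affine _ _ _).
apply: convex_set_le (concave_fun_affine _ _ _).
by apply: convex_fun_qform; rewrite ?invr_ge0.
Qed.

Lemma convex_set_Fset : (forall i, psd (H i)) -> convex_set (Fset phi xr H g).
Proof. by move=> Hpsd; apply: convex_set_bigcap => i; exact: convex_set_Fi. Qed.

Lemma Fset_center : (forall i, 0 <= phi i xr) -> xr \in Fset phi xr H g.
Proof.
move=> phi_ge0; rewrite inE => i; rewrite /Fi.
case: asboolP => _ //=; case: asboolP => _ /=; rewrite subrr dotv0r addr0 //.
by rewrite qform0 mulr0.
Qed.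

End FeasibleSet.

Theorem lemma4p4 (R : realType) (n N : nat)
  (J : 'rV[R]_n -> R) (Gamma : set 'rV[R]_n)
  (phi : 'I_N -> 'rV[R]_n -> R) (H : 'I_N -> 'M[R]_n)
  (* J : R^n -> R^+ smooth and strictly convex *)
  (hJpos : forall x, 0 <= J x) (hJsmooth : smooth J) (hJconv : strictly_convex J)
  (* Gamma *)
  (hGclosed : closed Gamma) (hGconn : connected Gamma)
  (hGpoly : forall x, Gamma x ->
     exists P, full_dim_polytope P /\ P x /\ P `<=` Gamma)
  (* semi-convex decomposition *)
  (hdec : Gamma = [set x | forall i, 0 <= phi i x])
  (hbd : forall i, boundary [set x | 0 <= phi i x] = [set x | phi i x = 0])
  (hphicont : forall i, continuous (phi i))
  (hphipw : forall i, piecewise_smooth (phi i))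
  (hphisc : forall i, semi_convex (phi i) (H i))
  (hA1 : forall i x, subdiff (phi i) x <> [set 0])
  (hA2 : forall i x, phi i x = 0 -> ~ subdiff (phi i) x 0)
  (hA3 : forall x, (exists i, phi i x = 0) ->
     exists v, forall i, phi i x = 0 -> dir_deriv (phi i) x v < 0)
  (* iterates *)
  (xk xk1 : 'rV[R]_n) (hxk : Gamma xk)
  (vstar : 'rV[R]_n) (hvstar : optimal_dir phi J xk vstar)
  (ghat : 'I_N -> 'rV[R]_n)
  (hghat : forall i, optimal_subgrad phi J xk vstar i (ghat i))
  (hxk1 : Fset phi xk H ghat xk1 /\
          forall x, Fset phi xk H ghat x -> J xk1 <= J x) :
  0 <= dotv (grad J xk1) (xk - xk1) /\ (J xk1 = J xk -> xk1 = xk).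
Proof.
pose F := Fset phi xk H ghat.
have Fcvx : convex_set F by apply: convex_set_Fset => i; case: (hphisc i).
have xkF : xk \in F by apply: Fset_center; rewrite hdec in hxk.
have xk1F : xk1 \in F by rewrite inE; case: hxk1.
have xk1_min z : z \in F -> J xk1 <= J z by rewrite inE; case: hxk1 => _; apply.
have J_diff : differentiable J xk1 := hJsmooth [::] xk1.
split.
  rewrite grad_dotvE //; apply: convex_min_derive_ge0 Fcvx xk1F xkF xk1_min _.
  exact: diff_derivable.
by move=> Jeq; exact: strictly_convex_min_unique hJconv Fcvx xk1F xkF xk1_min Jeq.
Qed.
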